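(* Let $X$ be a $\mathbf D([0,1),E)$-valued random element whose jump positions $0<Y_1<\dots<Y_{N_X}<1$ form a homogeneous Poisson point process on $[0,1)$ of intensity $\lambda>0$. Let $k\ge1$ and $(I_1,\dots,I_k)\in\mathrm{im}(\pi_k)$. Conditionally on the event $\{N_X=k,\ \pi_k(Y_1,\dots,Y_k)=(I_1,\dots,I_k)\}$, the vector $(Y_1,\dots,Y_k)$ has the same distribution as $(U_1,\dots,U_k)$, where $U_1,\dots,U_k$ are independent and $U_i$ is uniformly distributed on $I_i$.
   Context: $\mathbf D([0,1),E)$ is the space of piecewise constant functions $[0,1)\to E$ with finitely many jumps. Dyadic intervals of level $m$: $[(j-1)2^{-m},j2^{-m})$, $j=1,\dots,2^m$. For distinct $t_1,\dots,t_k\in[0,1)$ build a finite binary tree: the root is $[0,1)$; a node $I$ (a dyadic interval of level $m$) containing at least two of the points $t_i$ gets as children the two dyadic intervals of level $m+1$ contained in $I$; a node containing $0$ or $1$ of the points is a leaf. $\pi_k(t_1,\dots,t_k)=(I_1,\dots,I_k)$ is the list of the $k$ leaves containing exactly one point, arranged in their natural left-to-right order; $\mathrm{im}(\pi_k)$ is the set of all such lists. *)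

From HB Require Import structures.
From mathcomp Require Import all_boot all_order all_algebra.
From mathcomp Require Import all_classical all_reals all_analysis.
Set Implicit Arguments. Unset Strict Implicit. Unset Printing Implicit Defensive.
Import Order.TTheory GRing.Theory Num.Theory.
Local Open Scope classical_set_scope.
Local Open Scope ring_scope.

Section Defs.
Context {R : realType}.

(* ---------- Dyadic intervals ----------
   A dyadic interval of level m is coded by a pair (m, j) with j < 2^m and
   denotes [j 2^-m, (j+1) 2^-m)  (the paper's index j is our j+1). *)
Definition dyad := (nat * nat)%type.

Definition dyad_left (I : dyad) : R := I.2%:R / (2%:R ^+ I.1).

Definition in_dyad (I : dyad) (x : R) : bool :=
  (I.2%:R / (2%:R ^+ I.1) <= x) && (x < I.2.+1%:R / (2%:R ^+ I.1)).

Definition dyad_set (I : dyad) : set R := [set x | in_dyad I x].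

Definition npts (t : seq R) (I : dyad) : nat := count (in_dyad I) t.

(* Nodes of the binary tree built from the points t: the root [0,1) is a
   node, and the children of a node are nodes iff that node contains at
   least two points.  Equivalently: (m,j) is a node iff j < 2^m and every
   strict dyadic ancestor (level m' < m, index j / 2^(m-m')) contains at
   least two points of t. *)
Definition tree_node (t : seq R) (I : dyad) : Prop :=
  (I.2 < 2 ^ I.1)%N /\
  forall m', (m' < I.1)%N -> (2 <= npts t (m', I.2 %/ 2 ^ (I.1 - m')))%N.

(* leaves containing exactly one point (a node with one point is a leaf) *)
Definition leaf1 (t : seq R) (I : dyad) : Prop :=
  tree_node t I /\ npts t I = 1%N.

(* pi_graph t Is  <->  pi_k(t) = Is : Is lists exactly the leaves containing
   exactly one point, in their natural left-to-right order. *)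
Definition pi_graph (t : seq R) (Is : seq dyad) : Prop :=
  sorted (fun I J => dyad_left I < dyad_left J) Is /\
  (forall I, I \in Is <-> leaf1 t I).

Definition in01 (x : R) : bool := (0 <= x) && (x < 1).

Definition in_im_pi (k : nat) (Is : seq dyad) : Prop :=
  exists t : seq R, [/\ size t = k, uniq t, all in01 t & pi_graph t Is].

(* ---------- D([0,1),E) ----------
   f : R -> E (only its restriction to [0,1) matters) is piecewise constant
   on [0,1) with finitely many jumps located exactly at the points of s,
   where 0 < s_1 < ... < s_n < 1. *)
Definition D_with_jumps {E : Type} (f : R -> E) (s : seq R) : Prop :=
  let b := 0 :: rcons s 1 in
  [/\ sorted <%R (0 :: rcons s 1),
      (forall i, (i < size s + 1)%N -> forall x y,
          nth 0 b i <= x < nth 0 b i.+1 -> nth 0 b i <= y < nth 0 b i.+1 ->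
          f x = f y)
    & (forall i, (i < size s)%N -> f (nth 0 s i) <> f (nth 0 b i))].

Definition poisson_p (r : R) (n : nat) : R := r ^+ n / n`!%:R * expR (- r).

Definition cnt (A : set R) (s : seq R) : nat := count (fun x => x \in A) s.

Definition homogeneous_PPP {d} {T : measurableType d} (P : probability T R)
    (lam : R) (Y : T -> seq R) : Prop :=
  (forall A, measurable A -> forall n, measurable [set w | cnt A (Y w) = n]) /\
  (forall m (A : 'I_m -> set R),
     (forall i, measurable (A i) /\ A i `<=` [set x | in01 x]) ->
     (forall i j, i != j -> A i `&` A j = set0) ->
     forall n : 'I_m -> nat,
       P (\bigcap_(i in [set: 'I_m]) [set w | cnt (A i) (Y w) = n i]) =
       (\prod_(i < m)
          poisson_p (lam * fine (lebesgue_measure (A i))) (n i))%:E).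

Definition indep_uniform_on {d'} {T' : measurableType d'} (Q : probability T' R)
    (k : nat) (U : 'I_k -> T' -> R) (Is : seq dyad) : Prop :=
  [/\ (forall i, measurable_fun setT (U i)),
      (forall B : 'I_k -> set R, (forall i, measurable (B i)) ->
         Q (\bigcap_(i in [set: 'I_k]) (U i @^-1` B i)) =
         (\prod_(i < k) Q (U i @^-1` B i))%E)
    & (forall i B, measurable B ->
         Q (U i @^-1` B) =
         (lebesgue_measure (B `&` dyad_set (nth (0%N, 0%N) Is i)) *
          ((fine (lebesgue_measure (dyad_set (nth (0%N, 0%N) Is i))))^-1)%:E)%E)].

End Defs.

From HB Require Import structures.
From mathcomp Require Import all_boot all_order all_algebra.
From mathcomp Require Import all_classical all_reals all_analysis.
From mathcomp Require Import lra zify ring.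
Set Implicit Arguments.
Unset Strict Implicit.
Unset Printing Implicit Defensive.
Import Order.TTheory GRing.Theory Num.Theory.
Local Open Scope classical_set_scope.
Local Open Scope ring_scope.

(* The event {N = k, pi_k(Y) = (I_1,...,I_k)} only depends on the counts of Y
   in the I_j: it holds iff every I_j contains exactly one point of Y and no
   point lies outside them, because the tree built from any such configuration
   has the same one-point leaves.  The points being sorted, the j-th point then
   lies in I_j.  Intersected with {Y_j in B_j for all j}, the event says that
   the 2k+1 disjoint cells I_j & B_j, I_j minus B_j and [0,1) minus the I_j
   hold 1, 0 and 0 points, so by the Poisson property its probability is a
   constant times prod_j |I_j & B_j|, that is P(event) times
   prod_j |I_j & B_j| / |I_j|.  This identity on rectangles extends to every
   measurable set of k-tuples by Dynkin's pi-lambda theorem. *)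

Lemma count_uniq_single (T : eqType) (a : pred T) (s : seq T) (x : T) :
  uniq s -> a x -> {in s, forall y, a y -> y = x} -> count a s = (x \in s).
Proof.
move=> us ax ax1; rewrite -count_uniq_mem //; apply: eq_in_count => y ys /=.
by apply/idP/eqP => [/(ax1 y ys)|->].
Qed.

Lemma count_eq1_filter (T : eqType) (a : pred T) (s : seq T) (x : T) :
  count a s = 1%N -> x \in s -> a x -> [seq z <- s | a z] = [:: x].
Proof.
move=> c1 xs ax; have : x \in [seq z <- s | a z] by rewrite mem_filter ax xs.
rewrite -size_filter in c1.
by case: [seq z <- s | a z] c1 => [|z [|]] //= _; rewrite mem_seq1 => /eqP ->.
Qed.

Lemma count_eq1_inj (T : eqType) (a : pred T) (s : seq T) (x y : T) :
  count a s = 1%N -> x \in s -> y \in s -> a x -> a y -> x = y.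
Proof.
move=> c1 xs ys ax ay; have := mem_filter a y s.
by rewrite (count_eq1_filter c1 xs ax) ay ys mem_seq1 => /eqP.
Qed.

Lemma incr_bounded_id (f : nat -> nat) n :
  {in gtn n &, {homo f : i j / (i < j)%N}} -> {in gtn n, forall i, f i < n}%N ->
  {in gtn n, f =1 id}.
Proof.
move=> inc bnd.
have shift d i : (i + d < n)%N -> (f i + d <= f (i + d))%N.
  elim: d => [|d IH] hi; first by rewrite !addn0.
  have := IH ltac:(lia); have : (f (i + d) < f (i + d.+1))%N.
    by apply: inc; rewrite /= ?inE; lia.
  lia.
move=> i; rewrite inE => hi.
have above := shift (n.-1 - i)%N i ltac:(lia).
have top := bnd (i + (n.-1 - i))%N ltac:(rewrite inE; lia).
have below := shift i 0%N ltac:(lia).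
rewrite add0n in below.
lia.
Qed.

(** * Dyadic intervals and the leaves of the tree *)

Section Dyadic.
Variable R : realType.
Implicit Types (I J D : dyad) (x y : R) (u v : seq R).

Definition dyad_anc (m : nat) D : dyad := (m, (D.2 %/ 2 ^ (D.1 - m))%N).

Lemma exp2_gt0 n : (0 : R) < 2%:R ^+ n.
Proof. by rewrite exprn_gt0. Qed.

Lemma in_dyadE I x : @in_dyad R I x =
  (I.2%:R <= x * 2%:R ^+ I.1) && (x * 2%:R ^+ I.1 < I.2.+1%:R).
Proof. by rewrite /in_dyad ler_pdivrMr ?exp2_gt0 // ltr_pdivlMr ?exp2_gt0. Qed.

Lemma in_dyad_anc m I x : (m <= I.1)%N -> in_dyad I x -> in_dyad (dyad_anc m I) x.
Proof.
move=> hm; rewrite !in_dyadE /dyad_anc /=.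
set a := (I.1 - m)%N.
have -> : (2%:R ^+ I.1 : R) = 2%:R ^+ m * (2 ^ a)%:R by rewrite natrX -exprD subnKC.
have ha : (0 : R) < (2 ^ a)%:R by rewrite ltr0n expn_gt0.
rewrite mulrA => /andP[h1 h2]; apply/andP; split.
  by rewrite -(ler_pM2r ha) -natrM; apply: le_trans h1; rewrite ler_nat leq_divM.
rewrite -(ltr_pM2r ha) -natrM; apply: lt_le_trans h2 _.
by rewrite ler_nat ltn_ceil // expn_gt0.
Qed.

Lemma in_dyad_inj m j j' x : in_dyad (m, j) x -> in_dyad (m, j') x -> j = j'.
Proof.
rewrite !in_dyadE /= => /andP[a b] /andP[c d].
have h1 : (j < j'.+1)%N by rewrite -(ltr_nat R); exact: le_lt_trans a d.
have h2 : (j' < j.+1)%N by rewrite -(ltr_nat R); exact: le_lt_trans c b.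
by apply/eqP; rewrite eqn_leq -ltnS h1 -ltnS h2.
Qed.

Lemma dyad_ancA p m D : (p <= m)%N -> (m <= D.1)%N ->
  dyad_anc p (dyad_anc m D) = dyad_anc p D.
Proof.
by move=> hp hm; rewrite /dyad_anc /= -divnMA -expnD addnBA // subnK.
Qed.

Lemma dyad_anc_id D : dyad_anc D.1 D = D.
Proof. by case: D => a b; rewrite /dyad_anc /= subnn expn0 divn1. Qed.

(* A one-point leaf cannot be a strict ancestor of another tree node. *)
Lemma leaf1_eq_le u I J x : leaf1 u I -> leaf1 u J -> (I.1 <= J.1)%N ->
  in_dyad I x -> in_dyad J x -> I = J.
Proof.
case: I => p q; case: J => p' q' /= [_ hI] [[_ hJ] _] hpp hxI hxJ.
have eq2 := in_dyad_inj hxI (in_dyad_anc (I := (p', q')) hpp hxJ).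
move: hpp; rewrite leq_eqVlt => /orP[/eqP ep|lt].
  by subst p'; rewrite subnn expn0 divn1 in eq2; rewrite eq2.
by move: (hJ p lt); rewrite /= -eq2 hI.
Qed.

Lemma leaf1_eq u I J x : leaf1 u I -> leaf1 u J -> in_dyad I x -> in_dyad J x -> I = J.
Proof.
move=> hI hJ xI xJ; case: (leqP I.1 J.1) => h; first exact: leaf1_eq_le hI hJ h xI xJ.
exact/esym/(leaf1_eq_le hJ hI (ltnW h) xJ xI).
Qed.

Definition dyad_of x (m : nat) : dyad := (m, Num.truncn (x * 2%:R ^+ m)).

Lemma in_dyad_of x m : 0 <= x -> in_dyad (dyad_of x m) x.
Proof.
move=> x0; rewrite in_dyadE /=; apply: truncn_itv.
by rewrite mulr_ge0 // ltW // exp2_gt0.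
Qed.

Lemma dyad_anc_of x m m' : 0 <= x -> (m' <= m)%N ->
  dyad_anc m' (dyad_of x m) = dyad_of x m'.
Proof.
move=> x0 hm; have xm := in_dyad_anc (I := dyad_of x m) hm (in_dyad_of m x0).
have := in_dyad_inj xm (in_dyad_of m' x0).
by rewrite /dyad_anc /dyad_of /= => ->.
Qed.

Lemma in_dyad_of_le x y M M' : 0 <= x -> (M <= M')%N ->
  in_dyad (dyad_of x M') y -> in_dyad (dyad_of x M) y.
Proof. by move=> x0 hM /(in_dyad_anc (I := dyad_of x M') hM); rewrite dyad_anc_of. Qed.

(* At level M with 2^M > 1/|y - x| the dyadic intervals have length < |y - x|. *)
Lemma dyad_of_sep x y : 0 <= x -> x != y -> exists M, ~~ in_dyad (dyad_of x M) y.
Proof.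
move=> x0 xy.
have d0 : (0 : R) < `|y - x| by rewrite normr_gt0 subr_eq0 eq_sym.
exists (Num.truncn `|y - x|^-1).+1; set M := _.+1.
apply/negP => hy; have := in_dyad_of M x0; move: hy.
rewrite !in_dyadE /=; set j := Num.truncn _; move=> /andP[a b] /andP[c e].
have h1 : `|y - x| * 2%:R ^+ M < 1.
  by rewrite -(ger0_norm (ltW (exp2_gt0 M))) -normrM ltr_norml mulrBl; lra.
have h2 : `|y - x|^-1 < 2%:R ^+ M.
  have di : 0 < `|y - x|^-1 by rewrite invr_gt0.
  have /andP[_ h] := truncn_itv (ltW di).
  by apply: (lt_le_trans h); rewrite -natrX ler_nat ltnW // ltn_expl.
move: h2; rewrite -(ltr_pM2l d0) mulfV ?gt_eqF // => h2.
by move: (lt_trans h2 h1); rewrite ltxx.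
Qed.

Lemma dyad_of_sep_seq x u : 0 <= x -> x \notin u ->
  exists M, {in u, forall y, ~~ in_dyad (dyad_of x M) y}.
Proof.
move=> x0; elim: u => [|y u IH]; first by exists 0%N.
rewrite inE negb_or => /andP[xy /IH[M1 H1]]; have [M2 H2] := dyad_of_sep x0 xy.
exists (maxn M1 M2) => z; rewrite inE => /orP[/eqP ->|zu]; apply/negP.
  by move/(in_dyad_of_le x0 (leq_maxr _ _)); apply/negP.
by move/(in_dyad_of_le x0 (leq_maxl _ _)); apply/negP/H1.
Qed.

(* The one-point leaf containing x is the dyadic interval around x at the
   least level where it holds at most one point. *)
Lemma leaf1_cover u x : uniq u -> all in01 u -> x \in u ->
  exists2 D, leaf1 u D & in_dyad D x.
Proof.
move=> uu /allP a01 xu; have /andP[x0 x1] := a01 x xu.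
have exP : exists M, (npts u (dyad_of x M) <= 1)%N.
  have [M HM] := @dyad_of_sep_seq x (rem x u) x0 (negbT (mem_rem_uniqF x uu)).
  exists M; rewrite /npts (@count_uniq_single _ _ _ x) ?leq_b1 ?in_dyad_of // => y yu hy.
  by apply/eqP; apply: contraTT hy => yx; apply: HM; rewrite mem_rem_uniq // inE yx yu.
have [m0 hm0 hmin] := ex_minnP exP.
exists (dyad_of x m0); last exact: in_dyad_of.
split; last first.
  apply/eqP; rewrite eqn_leq hm0 -has_count.
  by apply/hasP; exists x => //; exact: in_dyad_of.
split=> [|m' hm'].
  rewrite /= -(ltr_nat R) natrX.
  have /andP[h _] := truncn_itv (mulr_ge0 x0 (ltW (exp2_gt0 m0))).
  by apply: le_lt_trans h _; rewrite -[X in _ < X]mul1r ltr_pM2r ?exp2_gt0.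
change (1 < npts u (dyad_anc m' (dyad_of x m0)))%N.
by rewrite dyad_anc_of ?(ltnW hm') // ltnNge; apply/negP => /hmin; rewrite leqNgt hm'.
Qed.

End Dyadic.

Section OnePerDyad.
Variables (R : realType) (Is : seq dyad).
Hypothesis uniq_Is : uniq Is.
Hypothesis disj_Is : {in Is &, forall I J x, @in_dyad R I x -> in_dyad J x -> I = J}.
Implicit Types (u v : seq R) (D : dyad).

Definition one_per_dyad u := (forall I, I \in Is -> npts u I = 1%N) /\
  {in u, forall x, exists2 I, I \in Is & in_dyad I x}.

Lemma count_dyad_partition (p : pred R) u :
  {in u, forall x, exists2 I, I \in Is & in_dyad I x} ->
  count p u = (\sum_(I <- Is) count (predI p (in_dyad I)) u)%N.
Proof.
elim: u => [_|x u IH cov] /=; first by rewrite big1_seq.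
rewrite big_split /= -IH => [|y yu]; last by apply: cov; rewrite inE yu orbT.
congr (_ + _)%N; have [I II xI] := cov x (mem_head _ _).
case: (p x) => /=; last by rewrite big1_seq.
transitivity (count (in_dyad ^~ x) Is).
  rewrite (@count_uniq_single _ _ _ I) ?II // => J JI xJ.
  exact: (disj_Is JI II xJ xI).
by rewrite -sum1_count big_mkcond; apply: eq_bigr => J _; case: in_dyad.
Qed.

Lemma one_per_dyad_npts u v A : one_per_dyad u -> one_per_dyad v ->
  (forall I, I \in Is -> (forall x : R, in_dyad I x -> in_dyad A x) \/
                         (forall x : R, in_dyad I x -> ~~ in_dyad A x)) ->
  npts u A = npts v A.
Proof.
move=> [u1 u2] [v1 v2] H; rewrite /npts (count_dyad_partition _ u2).
rewrite (count_dyad_partition _ v2); apply: eq_big_seq => I II.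
case: (H I II) => h.
  have e : predI (@in_dyad R A) (in_dyad I) =1 in_dyad I.
    by move=> x /=; case e: (in_dyad I x); rewrite ?andbF // (h x e).
  by rewrite !(eq_count e); have := u1 I II; have := v1 I II; rewrite /npts => -> ->.
have e : predI (@in_dyad R A) (in_dyad I) =1 pred0.
  by move=> x /=; case e: (in_dyad I x); rewrite ?andbF // (negbTE (h x e)).
by rewrite !(eq_count e) !count_pred0.
Qed.

(* A member of Is cannot be a strict ancestor of a tree node, since it holds
   only one point; hence it is nested in, or disjoint from, each ancestor. *)
Lemma one_per_dyad_anc u D m I : one_per_dyad u -> tree_node u D ->
  (m <= D.1)%N -> I \in Is ->
  (forall x : R, in_dyad I x -> in_dyad (dyad_anc m D) x) \/
  (forall x : R, in_dyad I x -> ~~ in_dyad (dyad_anc m D) x).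
Proof.
case: I => p q [npts1 _] [_ hD] hm II.
have [hmp|hpm] := leqP m p.
  case E: (dyad_anc m (p, q) == dyad_anc m D).
    by left => x /(in_dyad_anc (I := (p, q)) hmp); rewrite (eqP E).
  right => x /(in_dyad_anc (I := (p, q)) hmp) xA; apply/negP => xA'.
  by move: E; rewrite /dyad_anc /= (in_dyad_inj xA xA') eqxx.
case E: (dyad_anc p D == (p, q)).
  by move: (hD p (leq_trans hpm hm)); rewrite -/(dyad_anc p D) (eqP E) npts1.
right => x xI; apply/negP => /(in_dyad_anc (I := dyad_anc m D) (ltnW hpm)).
rewrite dyad_ancA ?(ltnW hpm) // => xA.
by move: E; rewrite /dyad_anc /= (in_dyad_inj xA xI) eqxx.
Qed.

Lemma one_per_dyad_tree_node u v D : one_per_dyad u -> one_per_dyad v ->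
  tree_node u D -> tree_node v D /\ npts u D = npts v D.
Proof.
move=> Gu Gv tD.
have E m : (m <= D.1)%N -> npts u (dyad_anc m D) = npts v (dyad_anc m D).
  by move=> hm; apply: one_per_dyad_npts => // I; exact: one_per_dyad_anc Gu tD hm.
case: (tD) => D2 hD; split; last by have := E D.1 (leqnn _); rewrite dyad_anc_id.
by split=> // m hm; rewrite -/(dyad_anc m D) -E ?(ltnW hm) //; apply: hD.
Qed.

Lemma one_per_dyad_leaf1 u v D : one_per_dyad u -> one_per_dyad v ->
  leaf1 u D -> leaf1 v D.
Proof.
move=> Gu Gv [tD n1]; have [tv e] := one_per_dyad_tree_node Gu Gv tD.
by split; rewrite // -e.
Qed.

Lemma one_per_dyad_size u : one_per_dyad u -> size u = size Is.
Proof.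
move=> [h1 h2]; rewrite -count_predT (count_dyad_partition _ h2) -sum1_size.
by apply: eq_big_seq => I II; rewrite -(h1 I II).
Qed.

End OnePerDyad.

Section PiGraph.
Variable R : realType.
Implicit Types (s t : seq R) (Is : seq dyad).

Lemma pi_graph_uniq t Is : pi_graph t Is -> uniq Is.
Proof.
case=> so _; apply: (sorted_uniq _ _ so) => [b a c|a]; first exact: lt_trans.
by rewrite /= ltxx.
Qed.

Lemma pi_graph_disj t Is : pi_graph t Is ->
  {in Is &, forall I J x, @in_dyad R I x -> in_dyad J x -> I = J}.
Proof. by case=> _ pt I J /pt II /pt JI x; exact: leaf1_eq II JI. Qed.

Lemma pi_graph_one_per_dyad t Is : uniq t -> all in01 t -> pi_graph t Is ->
  one_per_dyad Is t.
Proof.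
move=> ut t01 [_ pt]; split=> [I /pt[]//|x xt].
by have [D /pt] := leaf1_cover ut t01 xt; exists D.
Qed.

Lemma in_dyad_left_le I J (x y : R) : in_dyad I x -> in_dyad J y -> x < y ->
  @dyad_left R J <= dyad_left I -> in_dyad J x.
Proof.
rewrite /in_dyad /dyad_left => /andP[xI _] /andP[_ yJ] xy JI.
by rewrite (le_trans JI xI) (lt_trans xy yJ).
Qed.

Variables (k : nat) (Is : seq dyad) (t : seq R).
Hypotheses (size_t : size t = k) (uniq_t : uniq t) (t01 : all in01 t).
Hypothesis pi_t : pi_graph t Is.

Let uniq_Is := pi_graph_uniq pi_t.
Let disj_Is := pi_graph_disj pi_t.
Let one_per_t := pi_graph_one_per_dyad uniq_t t01 pi_t.

Lemma pi_graph_size : size Is = k.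
Proof. by rewrite -size_t (one_per_dyad_size uniq_Is disj_Is one_per_t). Qed.

Lemma pi_graphP s : uniq s -> all in01 s ->
  (size s = k /\ pi_graph s Is) <-> one_per_dyad Is s.
Proof.
move=> us s01; split=> [[_]|Gs]; first exact: pi_graph_one_per_dyad.
split; first by rewrite (one_per_dyad_size uniq_Is disj_Is Gs) pi_graph_size.
split=> [|I]; first exact: pi_t.1.
split=> [/pi_t.2|] h; first exact: (one_per_dyad_leaf1 uniq_Is disj_Is one_per_t Gs h).
exact/pi_t.2/(one_per_dyad_leaf1 uniq_Is disj_Is Gs one_per_t h).
Qed.

Lemma one_per_dyad_nth s : one_per_dyad Is s -> sorted <%R s -> size s = k ->
  forall j, (j < k)%N -> in_dyad (nth (0%N, 0%N) Is j) (nth 0 s j).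
Proof.
move=> [npts1 cov] ss sz.
have s_nth i : (i < k)%N -> nth 0 s i \in s by move=> hi; rewrite mem_nth ?sz.
have Is_nth i : (i < k)%N -> nth (0%N, 0%N) Is i \in Is.
  by move=> hi; rewrite mem_nth ?pi_graph_size.
pose f j := find (in_dyad ^~ (nth 0 s j)) Is.
have hf j : (j < k)%N -> (f j < k)%N /\ in_dyad (nth (0%N, 0%N) Is (f j)) (nth 0 s j).
  move=> hj; have [I II xI] := cov (nth 0 s j) (s_nth j hj).
  have hI : has (in_dyad ^~ (nth 0 s j)) Is by apply/hasP; exists I.
  by rewrite -pi_graph_size -has_find; split=> //; exact: nth_find _ hI.
have f_incr : {in gtn k &, {homo f : i j / (i < j)%N}}.
  move=> i j /[!inE] hi hj hij; have [fi xi] := hf i hi; have [fj xj] := hf j hj.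
  have lt_ij : nth 0 s i < nth 0 s j.
    by apply: (sorted_ltn_nth lt_trans 0 ss); rewrite ?inE ?sz.
  have [//|fji|fij] := ltngtP (f i) (f j).
    have : @dyad_left R (nth (0%N, 0%N) Is (f j)) < dyad_left (nth (0%N, 0%N) Is (f i)).
      have tr : transitive (fun I J : dyad => @dyad_left R I < dyad_left J).
        by move=> ? ? ?; exact: lt_trans.
      by apply: (sorted_ltn_nth tr _ pi_t.1); rewrite ?inE ?pi_graph_size.
    move=> /ltW /(in_dyad_left_le xi xj lt_ij) xj'.
    have /eqP := disj_Is (Is_nth _ fi) (Is_nth _ fj) xi xj'.
    rewrite nth_uniq ?pi_graph_size //.
    by move/eqP=> e; move: fji; rewrite e ltnn.
  have := count_eq1_inj (npts1 _ (Is_nth _ fi)) (s_nth i hi) (s_nth j hj) xi.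
  by rewrite fij => /(_ xj) eij; move: lt_ij; rewrite eij ltxx.
move=> j hj; have := (hf j hj).2.
by rewrite (incr_bounded_id f_incr (fun i hi => (hf i hi).1)).
Qed.

End PiGraph.

(** * The event as Poisson counts of disjoint cells *)

Lemma count_predI_split (T : eqType) (a p : pred T) (s : seq T) :
  count (predI p a) s = 1%N /\ count (predI (predC p) a) s = 0%N <->
  count a s = 1%N /\ {in s, forall x, a x -> p x}.
Proof.
have -> : count a s = (count (predI p a) s + count (predI (predC p) a) s)%N.
  by rewrite -size_filter -(count_predC p) !count_filter.
split=> [[-> c0]|[c1 ap]]; last first.
  suff c0 : count (predI (predC p) a) s = 0%N by rewrite c0 addn0 in c1.
  apply/eqP; rewrite -leqn0 leqNgt -has_count; apply/hasP => -[x xs /andP[/negP]].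
  by move=> /[swap] /(ap x xs).
split=> [|x xs ax]; first by rewrite c0.
apply: contraT => npx; have : has (predI (predC p) a) s.
  by apply/hasP; exists x => //; apply/andP.
by rewrite has_count c0.
Qed.

Lemma forall_ltn_double (P : nat -> Prop) n :
  (forall i, (i < (n + n).+1)%N -> P i) <->
  (forall j, (j < n)%N -> P j /\ P (n + j)%N) /\ P (n + n)%N.
Proof.
split=> [H|[H Hn] i hi]; first by split=> [j hj|]; [split; apply: H|apply: H]; lia.
have [lt_in|le_ni] := ltnP i n; first exact: (H i lt_in).1.
have [lt_i2n|] := ltnP i (n + n); last by move=> le; have -> : i = (n + n)%N by lia.
by have := (H (i - n)%N ltac:(lia)).2; rewrite subnKC.
Qed.

Lemma big_ord_double (R : comPzRingType) (G : nat -> R) n :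
  \prod_(i < (n + n).+1) G i =
  \prod_(i < n) G i * \prod_(i < n) G (n + i)%N * G (n + n)%N.
Proof. by rewrite big_ord_recr /= big_split_ord. Qed.

Section DyadMeasure.
Variable R : realType.
Implicit Types (I : dyad) (A : set R).

Lemma dyad_set_itv I : @dyad_set R I =
  [set` `[I.2%:R / 2%:R ^+ I.1, I.2.+1%:R / 2%:R ^+ I.1[%R].
Proof. by apply/seteqP; split => x; rewrite /= in_itv. Qed.

Lemma measurable_dyad_set I : measurable (@dyad_set R I).
Proof. by rewrite dyad_set_itv; exact: measurable_itv. Qed.

Lemma lebesgue_dyad_set I : lebesgue_measure (@dyad_set R I) = ((2%:R ^+ I.1)^-1)%:E.
Proof.
rewrite dyad_set_itv lebesgue_measure_itv /= lte_fin ltr_pM2r ?invr_gt0 ?exp2_gt0 //.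
by rewrite ltr_nat ltnSn -EFinD -mulrBl -natrB // subSnn mul1r.
Qed.

Lemma dyad_set01 : @dyad_set R (0%N, 0%N) = [set x | in01 x].
Proof. by apply/seteqP; split => x; rewrite /dyad_set /in01 /in_dyad /= expr0 !divr1. Qed.

Lemma dyad_set_sub01 I : (I.2 < 2 ^ I.1)%N -> @dyad_set R I `<=` [set x | in01 x].
Proof.
case: I => p q /= hq x; rewrite /dyad_set /= in_dyadE /= => /andP[h1 h2].
have hz := exp2_gt0 R p.
apply/andP; split; first by rewrite -(ler_pM2r hz) mul0r (le_trans _ h1).
rewrite -(ltr_pM2r hz) mul1r (lt_le_trans h2) //.
by rewrite -natrX ler_nat.
Qed.

Lemma lebesgue_sub_dyad_fin_num I A : measurable A -> A `<=` dyad_set I ->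
  lebesgue_measure A \is a fin_num.
Proof.
move=> mA sA; rewrite ge0_fin_numE ?measure_ge0 //.
have : (lebesgue_measure A <= lebesgue_measure (@dyad_set R I))%E.
  by apply: le_measure; rewrite ?inE //; exact: measurable_dyad_set.
by move/le_lt_trans; apply; rewrite lebesgue_dyad_set ltry.
Qed.

Lemma cnt_pred A (p : pred R) s : (forall x, A x <-> p x) -> cnt A s = count p s.
Proof.
by move=> h; apply: eq_count => x; apply/idP/idP => [/set_mem/h //|/h/mem_set].
Qed.

End DyadMeasure.

Section PoissonEvent.
Variables (R : realType) (d : measure_display) (T : measurableType d).
Variables (P : probability T R) (lam : R) (Y : T -> seq R).
Hypothesis PPP_Y : homogeneous_PPP P lam Y.
Variables (k : nat) (Is : seq dyad) (t : seq R).
Hypotheses (size_t : size t = k) (uniq_t : uniq t) (t01 : all in01 t).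
Hypothesis pi_t : pi_graph t Is.
Variable B : nat -> set R.
Hypothesis mB : forall j, measurable (B j).

Let Ik j := nth (0%N, 0%N) Is j.
Let size_Is : size Is = k := pi_graph_size size_t uniq_t t01 pi_t.

Definition outside_dyads :=
  [set x : R | in01 x /\ forall j, (j < k)%N -> ~~ in_dyad (Ik j) x].

(* The 2k+1 disjoint cells whose Poisson counts encode the event: I_j and B_j
   for j < k, I_j minus B_j at index k + j, and the rest of [0,1) at 2k. *)
Definition cell j : set R :=
  if (j < k)%N then dyad_set (Ik j) `&` B j
  else if (j < k + k)%N then dyad_set (Ik (j - k)) `\` B (j - k)
  else outside_dyads.

Definition cell_count j : nat := if (j < k)%N then 1 else 0.

Definition pi_event := [set w | size (Y w) = k /\ pi_graph (Y w) Is].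

Definition rect_event := [set w | forall i : 'I_k, B i (nth 0 (Y w) i)].

Lemma Ik_mem j : (j < k)%N -> Ik j \in Is.
Proof. by move=> hj; rewrite mem_nth ?size_Is. Qed.

Lemma Ik_inj j j' (x : R) : (j < k)%N -> (j' < k)%N ->
  in_dyad (Ik j) x -> in_dyad (Ik j') x -> j = j'.
Proof.
move=> hj hj' xj xj'; have := pi_graph_disj pi_t (Ik_mem hj) (Ik_mem hj') xj xj'.
by move/eqP; rewrite nth_uniq ?size_Is ?(pi_graph_uniq pi_t) // => /eqP.
Qed.

Lemma mem_Is_Ik I : I \in Is -> exists2 j, (j < k)%N & I = Ik j.
Proof.
by move=> II; exists (index I Is); rewrite /Ik ?nth_index // -size_Is index_mem.
Qed.

Lemma Ik_sub01 j : (j < k)%N -> dyad_set (Ik j) `<=` [set x : R | in01 x].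
Proof. by move=> /Ik_mem /(pi_t.2 (Ik j)) [[+ _] _]; apply: dyad_set_sub01. Qed.

Lemma one_per_dyad_counts s : all in01 s -> one_per_dyad Is s <->
  (forall j, (j < k)%N -> npts s (Ik j) = 1%N) /\ cnt outside_dyads s = 0%N.
Proof.
move=> /allP s01; split=> [[npts1 cov]|[npts1 out0]].
  split=> [j /Ik_mem|]; first exact: npts1.
  apply/eqP; rewrite -leqn0 leqNgt -has_count; apply/hasP => -[x xs /set_mem [_ xout]].
  by have [_ /mem_Is_Ik [j hj ->]] := cov x xs; apply/negP/xout.
split=> [I /mem_Is_Ik [j hj ->]|x xs]; first exact: npts1.
have [[j hj xj]|] := pselect (exists2 j, (j < k)%N & in_dyad (Ik j) x).
  by exists (Ik j); rewrite ?Ik_mem.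
move=> nx; have : has (fun x => x \in outside_dyads) s.
  apply/hasP; exists x => //; apply/mem_set; split; first exact: s01.
  by move=> j hj; apply/negP => xj; apply: nx; exists j.
by rewrite has_count -/(cnt _ _) out0.
Qed.

Lemma one_per_dyad_nth_mem s j (A : set R) : one_per_dyad Is s -> sorted <%R s ->
  size s = k -> (j < k)%N ->
  {in s, forall x, in_dyad (Ik j) x -> x \in A} <-> nth 0 s j \in A.
Proof.
move=> Gs ss sz hj; have sj := one_per_dyad_nth size_t uniq_t t01 pi_t Gs ss sz hj.
have js : nth 0 s j \in s by rewrite mem_nth ?sz.
split=> [|sA x xs xj]; first by apply.
by rewrite (count_eq1_inj (Gs.1 _ (Ik_mem hj)) xs js xj sj).
Qed.

Lemma cnt_cell_lo s j : (j < k)%N ->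
  cnt (cell j) s = count (predI (fun x => x \in B j) (in_dyad (Ik j))) s.
Proof.
move=> hj; apply: cnt_pred => x; rewrite /cell hj /=.
by split=> [[xI /mem_set ->]|/andP[/set_mem xB xI]].
Qed.

Lemma cnt_cell_hi s j : (j < k)%N ->
  cnt (cell (k + j)) s = count (predI (predC (fun x => x \in B j)) (in_dyad (Ik j))) s.
Proof.
move=> hj; apply: cnt_pred => x; rewrite /cell ltnNge leq_addr ltn_add2l hj addKn /=.
split=> [[xI xB]|/andP[xB xI]].
  by rewrite xI andbT; apply: contra_notN xB => /set_mem.
by split=> // /mem_set xB'; rewrite xB' in xB.
Qed.

Lemma cell_out : cell (k + k) = outside_dyads.
Proof. by rewrite /cell ltnNge leq_addr ltnn. Qed.

Lemma cell_count_lo j : (j < k)%N -> cell_count j = 1%N.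
Proof. by rewrite /cell_count => ->. Qed.

Lemma cell_count_hi j : cell_count (k + j) = 0%N.
Proof. by rewrite /cell_count ltnNge leq_addr. Qed.

Lemma pi_rect_counts s : uniq s -> all in01 s -> sorted <%R s ->
  (size s = k /\ pi_graph s Is) /\ (forall i : 'I_k, B i (nth 0 s i)) <->
  (forall i, (i < (k + k).+1)%N -> cnt (cell i) s = cell_count i).
Proof.
move=> us s01 ss; rewrite (pi_graphP size_t uniq_t t01 pi_t us s01).
have cellsE j : (j < k)%N ->
    cnt (cell j) s = cell_count j /\ cnt (cell (k + j)) s = cell_count (k + j) <->
    npts s (Ik j) = 1%N /\ {in s, forall x, in_dyad (Ik j) x -> x \in B j}.
  move=> hj; rewrite cnt_cell_lo // cnt_cell_hi // cell_count_lo // cell_count_hi.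
  exact: count_predI_split.
have countsE : (forall i, (i < (k + k).+1)%N -> cnt (cell i) s = cell_count i) <->
    (forall j, (j < k)%N ->
       npts s (Ik j) = 1%N /\ {in s, forall x, in_dyad (Ik j) x -> x \in B j})
    /\ cnt outside_dyads s = 0%N.
  rewrite forall_ltn_double cell_out cell_count_hi.
  by split=> -[H ->]; split=> // j hj; apply/(cellsE j hj)/H.
rewrite countsE; have sizeE Gs := ((pi_graphP size_t uniq_t t01 pi_t us s01).2 Gs).1.
split=> [[Gs hB]|[H out0]].
  have [npts1 ->] := (one_per_dyad_counts s01).1 Gs; split=> // j hj.
  split; first exact: npts1.
  by apply/(one_per_dyad_nth_mem _ Gs ss (sizeE Gs) hj)/mem_set/(hB (Ordinal hj)).
have Gs : one_per_dyad Is s by apply/(one_per_dyad_counts s01); split=> // j /H[].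
split=> // i; apply/set_mem/(one_per_dyad_nth_mem _ Gs ss (sizeE Gs) (ltn_ord i)).
exact: (H i (ltn_ord i)).2.
Qed.

Lemma measurable_outside_dyads : measurable outside_dyads.
Proof.
have -> : outside_dyads =
    [set x | in01 x] `&` \bigcap_(j in `I_k) ~` dyad_set (Ik j).
  apply/seteqP; split=> x /= [x01 H]; split=> // j hj; apply/negP; exact: H.
apply: measurableI; first by rewrite -dyad_set01; exact: measurable_dyad_set.
apply: fin_bigcap_measurable; first exact: finite_II.
by move=> j _; apply: measurableC; exact: measurable_dyad_set.
Qed.

Lemma measurable_cell i : measurable (cell i).
Proof.
rewrite /cell; case: ifP => _; first exact: measurableI (measurable_dyad_set _) (mB _).
case: ifP => _; first exact: measurableD (measurable_dyad_set _) (mB _).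
exact: measurable_outside_dyads.
Qed.

Lemma cell_sub01 i : cell i `<=` [set x | in01 x].
Proof.
rewrite /cell; case: ltnP => hi; first by move=> x [/(Ik_sub01 hi)].
case: ltnP => hi'; last by move=> x [].
by move=> x [/(@Ik_sub01 (i - k)%N ltac:(lia))].
Qed.

Lemma cell_disj i j x : (i < (k + k).+1)%N -> (j < (k + k).+1)%N ->
  cell i x -> cell j x -> i = j.
Proof.
rewrite /cell => hi hj; case: ltnP => a1; case: (ltnP j k) => b1.
- by move=> [ha _] [hb _]; exact: Ik_inj a1 b1 ha hb.
- case: ltnP => b2; last by move=> [ha _] [_ /(_ i a1)]; rewrite ha.
  move=> [ha hBa] [hb hBb]; have e := Ik_inj a1 (_ : j - k < k)%N ha hb.
  by exfalso; apply: hBb; rewrite -e; last lia.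
- case: ltnP => a2; last by move=> [_ /(_ j b1)] + [hb _]; rewrite hb.
  move=> [ha hBa] [hb hBb]; have e := Ik_inj b1 (_ : i - k < k)%N hb ha.
  by exfalso; apply: hBa; rewrite -e; last lia.
- case: ltnP => a2; case: ltnP => b2.
  + move=> [ha _] [hb _].
    have := @Ik_inj (i - k) (j - k) x ltac:(lia) ltac:(lia) ha hb; lia.
  + by move=> [ha _] [_ /(_ (i - k)%N ltac:(lia))]; rewrite ha.
  + by move=> [_ /(_ (j - k)%N ltac:(lia))] + [hb _]; rewrite hb.
  + lia.
Qed.

Hypothesis Y_sorted : forall w, [/\ uniq (Y w), all in01 (Y w) & sorted <%R (Y w)].

Lemma pi_rect_eventE : pi_event `&` rect_event =
  \bigcap_(i in [set: 'I_(k + k).+1]) [set w | cnt (cell i) (Y w) = cell_count i].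
Proof.
apply/seteqP; split=> w /=; have [us s01 ss] := Y_sorted w.
  by move=> /(pi_rect_counts us s01 ss) H i _; exact: H.
by move=> H; apply/(pi_rect_counts us s01 ss) => i hi; exact: (H (Ordinal hi) I).
Qed.

Lemma measurable_pi_rect : measurable (pi_event `&` rect_event).
Proof.
rewrite pi_rect_eventE; apply: fin_bigcap_measurable; first exact: finite_finset.
by move=> i _; apply: PPP_Y.1; exact: measurable_cell.
Qed.

Definition pi_const := lam ^+ k *
  \prod_(i < k) expR (- (lam * fine (lebesgue_measure (dyad_set (Ik i))))) *
  expR (- (lam * fine (lebesgue_measure outside_dyads))).

Lemma prob_pi_rect : P (pi_event `&` rect_event) =
  (pi_const * \prod_(i < k) fine (lebesgue_measure (dyad_set (Ik i) `&` B i)))%:E.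
Proof.
rewrite pi_rect_eventE (PPP_Y.2 (k + k).+1 (fun i => cell i)); last 2 first.
- by move=> i; split; [exact: measurable_cell|exact: cell_sub01].
- move=> i j ij; apply/seteqP; split=> // x [xi xj]; move: ij.
  by rewrite (val_inj (cell_disj (ltn_ord i) (ltn_ord j) xi xj)) eqxx.
set len := fun A => fine (@lebesgue_measure R A).
congr EFin.
rewrite (big_ord_double (fun n => poisson_p (lam * len (cell n)) (cell_count n))).
rewrite cell_out cell_count_hi.
set ilen := fun i => len (dyad_set (Ik i) `&` B i).
set olen := fun i => len (dyad_set (Ik i) `\` B i).
have lo : \prod_(i < k) poisson_p (lam * len (cell i)) (cell_count i) =
    lam ^+ k * \prod_(i < k) ilen i * \prod_(i < k) expR (- (lam * ilen i)).
  have -> : lam ^+ k = \prod_(i < k) lam by rewrite prodr_const card_ord.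
  rewrite -!big_split /=; apply: eq_bigr => i _.
  by rewrite /cell cell_count_lo // ltn_ord /poisson_p expr1 divr1.
have hi : \prod_(i < k) poisson_p (lam * len (cell (k + i)%N)) (cell_count (k + i)) =
    \prod_(i < k) expR (- (lam * olen i)).
  apply: eq_bigr => i _; rewrite cell_count_hi /poisson_p expr0 divr1 mul1r.
  by rewrite /cell ltnNge leq_addr ltn_add2l ltn_ord addKn.
have dyad_len :
    \prod_(i < k) expR (- (lam * ilen i)) * \prod_(i < k) expR (- (lam * olen i)) =
    \prod_(i < k) expR (- (lam * len (dyad_set (Ik i)))).
  rewrite -big_split; apply: eq_bigr => i _ /=; rewrite -expRD; congr expR.
  have mI := @measurable_dyad_set R (Ik i).
  rewrite /len (measureDI lebesgue_measure mI (mB i)) fineD; last 2 first.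
  - apply: (lebesgue_sub_dyad_fin_num (I := Ik i)); last exact: subDsetl.
    exact: measurableD.
  - apply: (lebesgue_sub_dyad_fin_num (I := Ik i)); last exact: subIsetl.
    exact: measurableI.
  by rewrite /ilen /olen /len; lra.
by rewrite /poisson_p expr0 divr1 mul1r lo hi /pi_const -dyad_len; ring.
Qed.

End PoissonEvent.

Lemma D_with_jumps_sorted (R : realType) (E : Type) (f : R -> E) s :
  D_with_jumps f s -> [/\ uniq s, all in01 s & sorted <%R s].
Proof.
case=> /= + _ _; rewrite (path_sortedE lt_trans) all_rcons => /andP[/andP[_ gt0] so].
have tr : transitive (fun x y : R => y < x) by move=> ? ? ? h1 h2; exact: lt_trans h2 h1.
move: so; rewrite -rev_sorted rev_rcons /= (path_sortedE tr) all_rev rev_sorted.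
move=> /andP[lt1 ss]; split=> //; first exact: (sorted_uniq lt_trans ltxx ss).
apply/allP => x xs; rewrite /in01 ltW ?(allP gt0 x xs) //=; exact: (allP lt1 x xs).
Qed.

(** * Extension from rectangles *)

Section CondLaw.
Variables (R : realType) (d d' dS : measure_display).
Variables (T : measurableType d) (T' : measurableType d') (S : measurableType dS).
Variables (P : probability T R) (Q : probability T' R).
Variables (A : set T) (f : T -> S) (g : T' -> S).
Hypothesis mA : measurable A.

(* f under P( . | A) has the law of g under Q on the set C *)
Definition cond_law_eq (C : set S) :=
  [/\ measurable (A `&` f @^-1` C), measurable (g @^-1` C) &
      P (A `&` f @^-1` C) = (P A * Q (g @^-1` C))%E].

Lemma cond_law_eqT : cond_law_eq setT.
Proof.
by rewrite /cond_law_eq !preimage_setT setIT probability_setT mule1; split.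
Qed.

Lemma cond_law_eqC C : cond_law_eq C -> cond_law_eq (~` C).
Proof.
move=> [mAC mgC PAC]; rewrite /cond_law_eq -!preimage_setC.
have AfC : A `&` ~` f @^-1` C = A `\` (A `&` f @^-1` C).
  by rewrite setDE setCI setIUr setICr set0U.
split; [by rewrite AfC; apply: measurableD|exact: measurableC|].
rewrite AfC measureD //; last by rewrite -ge0_fin_numE ?measure_ge0 ?fin_num_measure.
rewrite setIA setIid; transitivity (P A - P A * Q (g @^-1` C))%E; first by rewrite -PAC.
by rewrite probability_setC // muleBr ?mule1 ?fin_num_measure.
Qed.

Lemma cond_law_eq_bigcup (F : (set S)^nat) : trivIset setT F ->
  (forall n, cond_law_eq (F n)) -> cond_law_eq (\bigcup_n F n).
Proof.
move=> tF hF; have mAF n : measurable (A `&` f @^-1` F n) by case: (hF n).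
have mgF n : measurable (g @^-1` F n) by case: (hF n).
rewrite /cond_law_eq !preimage_bigcup setI_bigcupr; split.
- by apply: bigcup_measurable => n _.
- by apply: bigcup_measurable => n _.
have fPA : P A \is a fin_num by rewrite fin_num_measure.
rewrite !measure_bigcup //; first last.
- by move=> i j _ _ [w [[_ /= hi] [_ hj]]]; apply: tF => //; exists (f w).
- by move=> i j _ _ [w [/= hi hj]]; apply: tF => //; exists (g w).
rewrite -(fineK fPA) -nneseriesZl => [|i _]; last exact: measure_ge0.
by apply: eq_eseriesr => i _; rewrite fineK //; case: (hF i).
Qed.

Lemma cond_law_eq_measurable (G : set (set S)) :
  @measurable _ S = <<s G >> -> setI_closed G -> G `<=` cond_law_eq ->
  forall C, measurable C -> cond_law_eq C.
Proof.
move=> mG IG GP C mC; apply: (dynkin_induction mG IG) => //; last by rewrite -mG.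
- exact: cond_law_eqT.
- by move=> D _; exact: cond_law_eqC.
- by move=> F _; exact: cond_law_eq_bigcup.
Qed.

End CondLaw.

Lemma indep_uniform_on_bigcap (R : realType) d' (T' : measurableType d')
    (Q : probability T' R) k (U : 'I_k -> T' -> R) Is (B : nat -> set R) :
  indep_uniform_on Q U Is -> (forall j, measurable (B j)) ->
  let I j := nth (0%N, 0%N) Is j in
  Q (\bigcap_(i in [set: 'I_k]) (U i @^-1` B i)) =
  (\prod_(i < k) (fine (lebesgue_measure (dyad_set (I i) `&` B i)) /
                  fine (lebesgue_measure (dyad_set (I i)))))%:E.
Proof.
move=> [_ indep unif] mB I; rewrite (indep (fun i => B i)) // -prodEFin.
apply: eq_bigr => i _; rewrite unif // EFinM setIC fineK //.
apply: (lebesgue_sub_dyad_fin_num (I := I i)); last exact: subIsetl.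
exact: measurableI (measurable_dyad_set _) (mB i).
Qed.

Lemma in_big_setU_ord (X : Type) n (F : 'I_n -> set (set X)) (A : set X) :
  (\big[setU/set0]_(i < n) F i) A -> exists i, F i A.
Proof. by elim/big_rec: _ => [//|i S _ IH [|/IH//]]; exists i. Qed.

Section TupleRect.
Variables (R : realType) (k : nat).

Definition tuple_rect (B : nat -> set R) : set (k.-tuple R) :=
  [set x | forall i : 'I_k, B i (tnth x i)].

Definition tuple_rects := [set C | exists2 B : nat -> set R,
  (forall j, measurable (B j)) & C = tuple_rect B].

Lemma measurable_tuple_rect B : (forall j, measurable (B j)) -> measurable (tuple_rect B).
Proof.
move=> mB.
have -> : tuple_rect B = \bigcap_(i in [set: 'I_k]) ((tnth (T:=R))^~ i @^-1` B i).
  by apply/seteqP; split => x /= h i; [move=> _|]; exact: h.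
apply: fin_bigcap_measurable => [|i _]; first exact: finite_finset.
by rewrite -[X in measurable X]setTI; exact: measurable_tnth.
Qed.

Lemma tuple_rects_generate : @measurable _ (k.-tuple R) = <<s tuple_rects >>.
Proof.
apply/seteqP; split; last first.
  apply: smallest_sub; first exact: sigma_algebra_measurable.
  by move=> _ [B mB ->]; exact: measurable_tuple_rect.
apply: smallest_sub => [|C /in_big_setU_ord [i [A mA <-]]].
  exact: smallest_sigma_algebra.
apply: sub_gen_smallest; exists (fun j => if j == val i then A else setT).
  by move=> j; case: ifP.
apply/seteqP; split => x /=; last by move=> h; split=> //; have := h i; rewrite eqxx.
by move=> [_ h] j; case: ifP => // /eqP e; have -> : j = i by apply/val_inj.
Qed.

Lemma setI_closed_tuple_rects : setI_closed tuple_rects.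
Proof.
move=> _ _ [B mB ->] [B' mB' ->]; exists (fun j => B j `&` B' j) => [j|].
  exact: measurableI.
apply/seteqP; split => x /=; first by move=> [h1 h2] i.
by move=> h; split=> i; case: (h i).
Qed.

End TupleRect.

Section RectangleCase.
Variables (R : realType) (d d' : measure_display).
Variables (T : measurableType d) (T' : measurableType d').
Variables (P : probability T R) (Q : probability T' R).
Variables (lam : R) (Y : T -> seq R).
Hypothesis PPP_Y : homogeneous_PPP P lam Y.
Hypothesis Y_sorted : forall w, [/\ uniq (Y w), all in01 (Y w) & sorted <%R (Y w)].
Variables (k : nat) (Is : seq dyad) (t : seq R).
Hypotheses (size_t : size t = k) (uniq_t : uniq t) (t01 : all in01 t).
Hypothesis pi_t : pi_graph t Is.
Variable U : 'I_k -> T' -> R.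
Hypothesis unif_U : indep_uniform_on Q U Is.

Let Ik j := nth (0%N, 0%N) Is j.
Let len j := fine (lebesgue_measure (@dyad_set R (Ik j))).

Lemma pi_rect_eventT : pi_event Y k Is `&` rect_event Y k (fun=> setT) = pi_event Y k Is.
Proof. by apply/seteqP; split=> [w []|w]. Qed.

Lemma measurable_pi_event : measurable (pi_event Y k Is).
Proof.
by rewrite -pi_rect_eventT; exact: (measurable_pi_rect PPP_Y size_t uniq_t t01 pi_t).
Qed.

Lemma prob_pi_event : P (pi_event Y k Is) = (pi_const lam k Is * \prod_(i < k) len i)%:E.
Proof.
rewrite -pi_rect_eventT (prob_pi_rect PPP_Y size_t uniq_t t01 pi_t) //.
by congr (_ * _)%:E; apply: eq_bigr => i _; rewrite setIT.
Qed.

Lemma cond_law_eq_tuple_rect (B : nat -> set R) : (forall j, measurable (B j)) ->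
  cond_law_eq P Q (pi_event Y k Is) (fun w => [tuple nth 0 (Y w) i | i < k])
    (fun w' => [tuple U i w' | i < k]) (@tuple_rect R k B).
Proof.
move=> mB; rewrite /cond_law_eq.
have -> :
    pi_event Y k Is `&` (fun w => [tuple nth 0 (Y w) i | i < k]) @^-1` @tuple_rect R k B =
    pi_event Y k Is `&` rect_event Y k B.
  by apply/seteqP; split=> w /= [Ew hB]; split=> // i; have := hB i; rewrite tnth_mktuple.
have -> : (fun w' => [tuple U i w' | i < k]) @^-1` @tuple_rect R k B =
    \bigcap_(i in [set: 'I_k]) (U i @^-1` B i).
  apply/seteqP; split=> w' /= hB i; last by rewrite tnth_mktuple; exact: hB.
  by move=> _; have := hB i; rewrite tnth_mktuple.
split.
- exact: (measurable_pi_rect PPP_Y size_t uniq_t t01 pi_t).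
- apply: fin_bigcap_measurable => [|i _]; first exact: finite_finset.
  by case: unif_U => mU _ _; rewrite -[X in measurable X]setTI; exact: mU.
rewrite (prob_pi_rect PPP_Y size_t uniq_t t01 pi_t) // prob_pi_event.
rewrite (indep_uniform_on_bigcap unif_U mB) -EFinM; congr EFin.
rewrite -[RHS]mulrA -big_split /=; congr (_ * _).
apply: eq_bigr => i _; rewrite mulrCA mulfV ?mulr1 // /len /Ik lebesgue_dyad_set /=.
by rewrite invr_eq0 expf_eq0 pnatr_eq0 andbF.
Qed.

End RectangleCase.

Theorem lemma5 (R : realType) (E : Type)
  (d : measure_display) (T : measurableType d) (P : probability T R)
  (X : T -> R -> E) (Y : T -> seq R) (lam : R)
  (hlam : 0 < lam)
  (hXY : forall w, D_with_jumps (X w) (Y w))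
  (hPPP : homogeneous_PPP P lam Y)
  (k : nat) (hk : (1 <= k)%N) (Is : seq dyad) (hIs : @in_im_pi R k Is)
  (d' : measure_display) (T' : measurableType d') (Q : probability T' R)
  (U : 'I_k -> T' -> R) (hU : indep_uniform_on Q U Is) :
  let Ev := [set w | size (Y w) = k /\ pi_graph (Y w) Is] in
  forall B : set (k.-tuple R), measurable B ->
    P (Ev `&` [set w | [tuple nth 0 (Y w) i | i < k] \in B]) =
    (P Ev * Q [set w' | [tuple U i w' | i < k] \in B])%E.
Proof.
move=> Ev C mC; have [t [size_t uniq_t t01 pi_t]] := hIs.
have Y_sorted w := D_with_jumps_sorted (hXY w).
have preimageE (S : Type) (f : S -> k.-tuple R) : [set w | f w \in C] = f @^-1` C.
  by apply/seteqP; split=> w /=; rewrite inE.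
rewrite !preimageE; have mEv := measurable_pi_event hPPP Y_sorted size_t uniq_t t01 pi_t.
suff /(_ C mC) [_ _] : forall C : set (k.-tuple R), measurable C ->
    cond_law_eq P Q (pi_event Y k Is)
      (fun w => [tuple nth 0 (Y w) i | i < k]) (fun w' => [tuple U i w' | i < k]) C.
  by [].
apply: (cond_law_eq_measurable mEv (tuple_rects_generate R k)
  (@setI_closed_tuple_rects R k)).
move=> _ [B mB ->].
exact: (cond_law_eq_tuple_rect hPPP Y_sorted size_t uniq_t t01 pi_t hU).
Qed.
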